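(* Let $X$ and $\Theta$ be compact metric spaces, $\tau:\Theta\times X\to X$, $(\theta,x)\mapsto\tau_\theta(x)$, continuous, $\Omega=X\times\Theta$, and $\mathcal{H}$ the set of holonomic Borel probability measures on $\Omega$, i.e. those $\hat\nu$ with $\int_\Omega [f(\tau_\theta(x))-f(x)]\,d\hat\nu(x,\theta)=0$ for all $f\in C(X,\mathbb{R})$; for $\hat\nu\in\mathcal{H}$ write $\nu=\pi_*\hat\nu$ for its marginal on $X$ ($\pi:\Omega\to X$ the projection). Let $\mu$ be a Borel probability on $\Theta$, let $\psi:X\to\mathbb{R}$ be a positive continuous function, let $dq_x(\theta)=\psi(\tau_\theta(x))\,d\mu(\theta)$, and $B_q(g)(x)=\int_\Theta g(\tau_\theta(x))\,dq_x(\theta)$, $B_\mu(g)(x)=\int_\Theta g(\tau_\theta(x))\,d\mu(\theta)$. Define the topological pressure \[ P(\psi)=\sup_{\hat\nu\in\mathcal{H}}\ \inf_{g\in C(X,\mathbb{R}),\,g>0}\int_X\ln\frac{B_q(g)}{g}\,d\nu, \] and the variational entropy $h_v(\hat\nu)=\inf_{g\in C(X,\mathbb{R}),\,g>0}\int_X\ln\frac{B_\mu(g)}{g}\,d\nu$. Then \[ P(\psi)=\sup_{\hat\nu\in\mathcal{H}}\Big\{h_v(\hat\nu)+\int_X\log\psi\,d\nu\Big\}. \] *)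

From HB Require Import structures.
From mathcomp Require Import all_boot all_order all_algebra.
From mathcomp Require Import all_classical all_reals all_analysis.
Set Implicit Arguments. Unset Strict Implicit. Unset Printing Implicit Defensive.
Import Order.TTheory GRing.Theory Num.Theory.
Import numFieldNormedType.Exports.
Local Open Scope classical_set_scope.
Local Open Scope ring_scope.

Definition Borel {R : realType} (T : pseudoPMetricType R) :=
  g_sigma_algebraType (@open T).

Section defs.
Context {R : realType} {X Th : pseudoPMetricType R}.

Definition Omega := (Borel X * Borel Th)%type.

Definition holonomic (tau : Th -> X -> X) : set (probability Omega R) :=
  [set nuhat | forall f : X -> R, continuous f ->
     (integral nuhat setT (fun z : Omega => (f (tau z.2 z.1) - f z.1)%:E) = 0)%E].

Definition marg (nuhat : probability Omega R) : set (Borel X) -> \bar R :=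
  pushforward nuhat (fun z : Omega => z.1).

Definition Bmu (tau : Th -> X -> X) (mu : probability (Borel Th) R)
  (g : X -> R) (x : X) : R :=
  fine (\int[mu]_th (g (tau th x))%:E).

(* B_q(g)(x) = int_Theta g(tau_theta x) dq_x(theta),
   where dq_x(theta) = psi(tau_theta x) dmu(theta) *)
Definition Bq (tau : Th -> X -> X) (mu : probability (Borel Th) R)
  (psi : X -> R) (g : X -> R) (x : X) : R :=
  fine (\int[mu]_th (g (tau th x) * psi (tau th x))%:E).

Definition poscont : set (X -> R) :=
  [set g : X -> R | continuous g /\ forall x : X, 0 < g x].

Definition inf_ln (B : (X -> R) -> X -> R) (nuhat : probability Omega R)
  : \bar R :=
  ereal_inf [set (\int[marg nuhat]_x (ln (B g x / g x))%:E)%E | g in poscont].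

Definition pressure (tau : Th -> X -> X) (mu : probability (Borel Th) R)
  (psi : X -> R) : \bar R :=
  ereal_sup [set inf_ln (Bq tau mu psi) nuhat | nuhat in holonomic tau].

Definition hv (tau : Th -> X -> X) (mu : probability (Borel Th) R)
  (nuhat : probability Omega R) : \bar R :=
  inf_ln (Bmu tau mu) nuhat.

End defs.

(* Since dq_x(theta) = psi(tau_theta x) dmu(theta), we have
   B_q g = B_mu (g psi), hence pointwise
     ln (B_q g / g) = ln (B_mu (g psi) / (g psi)) + ln psi.
   Multiplication by psi is a bijection of the positive continuous functions,
   so for every measure the infimum defining the pressure is the one defining
   h_v, shifted by the finite constant int ln psi dnu.  The analytic work is to
   justify the integrals: B_mu maps positive continuous functions to positive
   continuous functions (continuity by the tube lemma on the compact Theta),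
   and continuous functions on the compact X are bounded, hence integrable for
   any probability. *)

From HB Require Import structures.
From mathcomp Require Import all_boot all_order all_algebra.
From mathcomp Require Import all_classical all_reals all_analysis.
From mathcomp Require Import measurable_realfun ring.
Import Order.TTheory GRing.Theory Num.Theory.
Import numFieldNormedType.Exports.
Local Open Scope classical_set_scope.
Local Open Scope ring_scope.

Section continuous_on_compact.
Context {R : realType} {T : pseudoPMetricType R}.
Implicit Types f : T -> R.

Lemma continuous_Borel_measurable f :
  continuous f -> measurable_fun [set: Borel T] (f : Borel T -> R).
Proof.
move=> /continuousP cf; apply: (measurability _ (RGenOpens.measurableE R)).
move=> _ [_ [a [b ->] <-]]; rewrite setTI.
by apply: sub_sigma_algebra; apply/cf/interval_open.
Qed.

Hypothesis compT : compact [set: T].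

Lemma compact_continuous_bounded f :
  continuous f -> exists M, forall x, `|f x| <= M.
Proof.
move=> cf; have cnf : continuous (fun x => `|f x|).
  by move=> x; apply: continuous_comp (cf x) (@norm_continuous _ R^o _).
have [c _ maxc] := compact_EVT_max (ex_intro _ point I) compT
  (continuous_subspaceT cnf).
by exists `|f c| => x; apply: maxc; rewrite inE.
Qed.

Lemma compact_continuous_gt0_lb f :
  continuous f -> (forall x, 0 < f x) -> exists2 m, 0 < m & forall x, m <= f x.
Proof.
move=> cf f_gt0.
have [c _ minc] := compact_EVT_min (ex_intro _ point I) compT
  (continuous_subspaceT cf).
by exists (f c) => // x; apply: minc; rewrite inE.
Qed.

End continuous_on_compact.

Lemma probability_bounded_integrable {R : realType} d (T : measurableType d)
    (P : probability T R) (g : T -> R) :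
  measurable_fun [set: T] g -> (exists M, forall x, `|g x| <= M) ->
  P.-integrable [set: T] (EFin \o g).
Proof.
move=> mg [M gM]; apply: measurable_bounded_integrable => //.
  by have /= -> := probability_setT P; rewrite ltry.
exists M; split; first by rewrite num_real.
by move=> y My x _; apply: le_trans (gM x) (ltW My).
Qed.

Lemma abse_probability_integral_le {R : realType} d (T : measurableType d)
    (P : probability T R) (g : T -> R) (e : R) :
  measurable_fun [set: T] g -> 0 <= e -> (forall x, `|g x| <= e) ->
  (`|\int[P]_x (g x)%:E| <= e%:E)%E.
Proof.
move=> mg e0 ge; have mEg : measurable_fun [set: T] (EFin \o g).
  exact/measurable_EFinP.
apply: le_trans (le_abse_integral P measurableT mEg) _.
apply: le_trans (integral_le_bound e%:E measurableT mEg _ _) _.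
- by rewrite lee_fin.
- by apply: aeW => x _ /=; rewrite lee_fin.
by have /= -> := probability_setT P; rewrite mule1.
Qed.

Section Bmu_positive_continuous.
Context {R : realType} {X Th : pseudoPMetricType R}.
Variables (compTh : compact [set: Th]) (tau : Th -> X -> X).
Hypothesis ctau : continuous (fun p : Th * X => tau p.1 p.2).
Variable mu : probability (Borel Th) R.
Implicit Types h : X -> R.

Lemma continuous_tau_comp h x :
  continuous h -> continuous (fun th => h (tau th x)).
Proof.
move=> ch th; have cpair : {for th, continuous (fun t : Th => (t, x))}.
  by apply: cvg_pair; [exact: cvg_id | exact: cvg_cst].
exact: continuous_comp (continuous_comp cpair (ctau _)) (ch _).
Qed.

Lemma integrable_tau_comp h x : continuous h ->
  mu.-integrable [set: Borel Th] (EFin \o (fun th => h (tau th x))).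
Proof.
move=> ch; have chx := continuous_tau_comp _ x ch.
apply: probability_bounded_integrable.
  exact: continuous_Borel_measurable.
exact: compact_continuous_bounded.
Qed.

Lemma BmuE h x : continuous h ->
  (\int[mu]_th (h (tau th x))%:E)%E = (Bmu tau mu h x)%:E.
Proof.
move=> ch; rewrite fineK //.
by apply: integrable_fin_num => //; exact: integrable_tau_comp.
Qed.

Lemma Bmu_gt0 h x : poscont h -> 0 < Bmu tau mu h x.
Proof.
move=> [ch h_gt0]; have [m m_gt0 mh] := compact_continuous_gt0_lb compTh _
  (continuous_tau_comp _ x ch) (fun th => h_gt0 _).
rewrite -lte_fin -BmuE //; apply: (@lt_le_trans _ _ (\int[mu]_th m%:E)%E).
  by rewrite integral_cst //; have /= -> := probability_setT mu; rewrite mule1.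
apply: le_integral => //; last by move=> th _; rewrite lee_fin.
  apply: (@probability_bounded_integrable _ _ _ _ (cst m)) => //.
  by exists `|m|.
exact: integrable_tau_comp.
Qed.

(* Tube lemma around the compact fibre [Th * [set x0]]. *)
Lemma near_tau_comp_unif h x0 e : continuous h -> 0 < e ->
  \forall x \near x0, forall th, `|h (tau th x0) - h (tau th x)| < e.
Proof.
move=> ch e_gt0; have e2_gt0 : 0 < e / 2 by rewrite divr_gt0.
suff : \forall x \near x0,
    [set: Th] `<=` (fun th => `|h (tau th x0) - h (tau th x)| < e).
  by apply: filterS => x + th; exact.
apply: (proj1 (compact_near_coveringP [set: Th]) compTh) => th _.
have /cvgrPdist_lt /(_ _ e2_gt0) := continuous_comp (ctau (th, x0)) (ch _).
move=> [[A B] /= [nA nB] AB]; exists (A, B) => // -[th' x] /= [Ath' Bx].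
have := AB (th', x) (conj Ath' Bx).
have := AB (th', x0) (conj Ath' (nbhs_singleton nB)).
move=> /= h1 h2; rewrite (splitr e).
apply: le_lt_trans (ler_distD (h (tau th x0)) _ _) _.
by rewrite distrC; exact: ltrD.
Qed.

Lemma continuous_Bmu h : continuous h -> continuous (Bmu tau mu h).
Proof.
move=> ch x0; apply/cvgrPdist_lt => e e_gt0.
have e2_gt0 : 0 < e / 2 by rewrite divr_gt0.
have e2_lt_e : e / 2 < e by rewrite ltr_pdivrMr // ltr_pMr // ltr1n.
apply: filterS (near_tau_comp_unif _ x0 _ ch e2_gt0) => x near_x.
apply: le_lt_trans e2_lt_e.
rewrite -lee_fin -abse_EFin EFinB -!BmuE // -integralB_EFin //;
  try exact: integrable_tau_comp.
under eq_integral do rewrite -EFinB.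
apply: abse_probability_integral_le => [||th]; last exact/ltW/near_x.
- by apply: measurable_funB; apply: continuous_Borel_measurable;
    exact: continuous_tau_comp.
- exact: ltW.
Qed.

Lemma continuous_ln_Bmu_div h : poscont h ->
  continuous (fun x => ln (Bmu tau mu h x / h x)).
Proof.
move=> pch x; have [ch h_gt0] := pch; have B_gt0 := Bmu_gt0 _ x pch.
have cdiv : {for x, continuous (fun x => Bmu tau mu h x / h x)}.
  apply: cvgM; first exact: continuous_Bmu.
  by apply: cvgV; [rewrite gt_eqF | exact: ch].
by apply: continuous_comp cdiv (continuous_ln _); rewrite divr_gt0.
Qed.

End Bmu_positive_continuous.

Section marginal_integral.
Context {R : realType} {X Th : pseudoPMetricType R}.
Variables (compX : compact [set: X]) (nuhat : probability (@Omega R X Th) R).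
Implicit Types f g : X -> R.

Lemma integrable_comp_fst f : continuous f ->
  nuhat.-integrable [set: Omega] (EFin \o (fun z : Omega => f z.1)).
Proof.
move=> cf; apply: probability_bounded_integrable.
  exact: measurableT_comp (continuous_Borel_measurable _ cf) measurable_fst.
have [M fM] := compact_continuous_bounded compX _ cf.
by exists M => z; exact: fM.
Qed.

Lemma integral_marg f : continuous f ->
  (\int[marg nuhat]_x (f x)%:E = \int[nuhat]_z (f z.1)%:E)%E.
Proof.
move=> cf; rewrite /marg (integral_pushforward measurable_fst) //.
- by apply/measurable_EFinP; exact: continuous_Borel_measurable.
- by rewrite preimage_setT; exact: integrable_comp_fst.
Qed.

Lemma integral_marg_fin_num f : continuous f ->
  (\int[marg nuhat]_x (f x)%:E)%E \is a fin_num.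
Proof.
move=> cf; rewrite integral_marg //.
by apply: integrable_fin_num => //; exact: integrable_comp_fst.
Qed.

Lemma integral_margD f g : continuous f -> continuous g ->
  (\int[marg nuhat]_x (f x + g x)%:E =
   \int[marg nuhat]_x (f x)%:E + \int[marg nuhat]_x (g x)%:E)%E.
Proof.
move=> cf cg; have cfg : continuous (fun x => f x + g x).
  by move=> x; apply: cvgD; [exact: cf | exact: cg].
rewrite !integral_marg //.
exact: (integralD_EFin measurableT
  (integrable_comp_fst _ cf) (integrable_comp_fst _ cg)).
Qed.

End marginal_integral.

Lemma ereal_infDr {R : realType} (S : set (\bar R)) (c : R) :
  ereal_inf [set (y + c%:E)%E | y in S] = (ereal_inf S + c%:E)%E.
Proof.
apply/le_anti/andP; split; last first.
  by apply/ereal_infP => _ [y Sy <-]; apply/leeD2r/ereal_inf_lbound.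
rewrite -leeBlDr //; apply/ereal_infP => y Sy.
by rewrite leeBlDr //; apply: ereal_inf_lbound; exists y.
Qed.

Section positive_continuous.
Context {R : realType} {X : pseudoPMetricType R}.
Implicit Types g h : X -> R.

Lemma poscontM g h : poscont g -> poscont h -> poscont (g \* h).
Proof.
move=> [cg g_gt0] [ch h_gt0]; split => [x|x]; last by rewrite mulr_gt0.
by apply: cvgM; [exact: cg | exact: ch].
Qed.

Lemma poscontV h : poscont h -> poscont (fun x => (h x)^-1).
Proof.
move=> [ch h_gt0]; split => [x|x]; last by rewrite invr_gt0.
by apply: cvgV; [rewrite gt_eqF | exact: ch].
Qed.

Lemma image_poscont_mulr h : poscont h -> [set g \* h | g in poscont] = poscont.
Proof.
move=> pch; apply/seteqP; split => [_ [g pcg <-]|k pck]; first exact: poscontM.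
exists (k \* (fun x => (h x)^-1)); first exact/poscontM/poscontV.
by apply/funext => x /=; rewrite mulfVK // gt_eqF //; case: pch.
Qed.

End positive_continuous.

Section pressure_variational.
Context {R : realType} {X Th : pseudoPMetricType R}.
Variables (compX : compact [set: X]) (compTh : compact [set: Th]).
Variable tau : Th -> X -> X.
Hypothesis ctau : continuous (fun p : Th * X => tau p.1 p.2).
Variables (mu : probability (Borel Th) R) (psi : X -> R).
Hypothesis pcpsi : poscont psi.

Lemma Bq_Bmu g : Bq tau mu psi g = Bmu tau mu (g \* psi).
Proof. by []. Qed.

Lemma ln_Bq_div g x : poscont g ->
  ln (Bq tau mu psi g x / g x) =
  ln (Bmu tau mu (g \* psi) x / (g \* psi) x) + ln (psi x).
Proof.
move=> pcg; have [_ g_gt0] := pcg; have [_ psi_gt0] := pcpsi.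
have B_gt0 : 0 < Bmu tau mu (g \* psi) x.
  by apply: Bmu_gt0 => //; exact: poscontM.
rewrite Bq_Bmu -lnM ?posrE ?divr_gt0 ?mulr_gt0 //=; congr ln.
by field; rewrite !gt_eqF.
Qed.

Lemma inf_ln_Bq nuhat : inf_ln (Bq tau mu psi) nuhat =
  (hv tau mu nuhat + \int[marg nuhat]_x (ln (psi x))%:E)%E.
Proof.
have [cpsi psi_gt0] := pcpsi.
have cln : continuous (fun x => ln (psi x)).
  by move=> x; apply: continuous_comp (cpsi x) (continuous_ln (psi_gt0 x)).
rewrite -(fineK (integral_marg_fin_num compX nuhat _ cln)) /hv /inf_ln.
rewrite -ereal_infDr -[in RHS](image_poscont_mulr _ pcpsi) !image_comp.
congr ereal_inf; apply: eq_imagel => g pcg /=.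
rewrite fineK ?integral_marg_fin_num // -integral_margD //.
  by congr integral; apply/funext => x; rewrite ln_Bq_div.
exact/continuous_ln_Bmu_div/poscontM.
Qed.

End pressure_variational.

Theorem mainTheorem6 (R : realType) (X Th : pseudoPMetricType R)
  (hausX : hausdorff_space X) (compX : compact [set: X])
  (hausTh : hausdorff_space Th) (compTh : compact [set: Th])
  (tau : Th -> X -> X)
  (ctau : continuous (fun p : Th * X => tau p.1 p.2))
  (mu : probability (Borel Th) R)
  (psi : X -> R) (cpsi : continuous psi) (ppsi : forall x, 0 < psi x) :
  pressure tau mu psi =
  ereal_sup [set (hv tau mu nuhat + \int[marg nuhat]_x (ln (psi x))%:E)%E
            | nuhat in holonomic tau].
Proof.
congr ereal_sup; apply: eq_imagel => nuhat _.
exact: (inf_ln_Bq compX compTh tau ctau mu psi (conj cpsi ppsi) nuhat).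
Qed.
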